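(* Let $\psi:\mathbb{H}\to\mathbb{H}$ be a linear isometry. The pair $(\varphi,\psi)=(I_{\mathbb{H}},\psi)$ satisfies (i) $\varphi(\varphi(x)x)=\varphi(x)x$ for all $x$, (ii) $\varphi(\bar x\psi(x))=\bar x\psi(x)$ for all $x$, (iii) $\psi(\psi(y)\bar x+y\varphi(x))=\psi(y)\bar x+y\varphi(x)$ for all $x,y$, if and only if $\psi\in\{I_{\mathbb{H}}\}\cup\{-T_{a,a}\circ\sigma_{\mathbb{H}}: a\in\mathbb{H},\ |a|=1\}$.
   Context: $T_{a,b}(x)=axb$ and $\sigma_{\mathbb{H}}(x)=\bar x$ on the quaternions $\mathbb{H}$; $I_{\mathbb{H}}$ is the identity. *)

From Stdlib Require Import Reals.
Open Scope R_scope.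

Record quat := Quat { q0 : R; q1 : R; q2 : R; q3 : R }.

(* x = q0 + q1 i + q2 j + q3 k *)
Definition qadd (x y : quat) : quat :=
  Quat (q0 x + q0 y) (q1 x + q1 y) (q2 x + q2 y) (q3 x + q3 y).
Definition qopp (x : quat) : quat := Quat (- q0 x) (- q1 x) (- q2 x) (- q3 x).
Definition qscale (r : R) (x : quat) : quat :=
  Quat (r * q0 x) (r * q1 x) (r * q2 x) (r * q3 x).
Definition qmul (x y : quat) : quat :=
  Quat (q0 x * q0 y - q1 x * q1 y - q2 x * q2 y - q3 x * q3 y)
       (q0 x * q1 y + q1 x * q0 y + q2 x * q3 y - q3 x * q2 y)
       (q0 x * q2 y - q1 x * q3 y + q2 x * q0 y + q3 x * q1 y)
       (q0 x * q3 y + q1 x * q2 y - q2 x * q1 y + q3 x * q0 y).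
Definition qconj (x : quat) : quat := Quat (q0 x) (- q1 x) (- q2 x) (- q3 x).
Definition qnorm (x : quat) : R :=
  sqrt (q0 x * q0 x + q1 x * q1 x + q2 x * q2 x + q3 x * q3 x).

Definition T (a b : quat) (x : quat) : quat := qmul (qmul a x) b.

Definition qlinear (f : quat -> quat) : Prop :=
  (forall x y, f (qadd x y) = qadd (f x) (f y)) /\
  (forall (r : R) x, f (qscale r x) = qscale r (f x)).

Definition qisometry (f : quat -> quat) : Prop :=
  qlinear f /\ forall x, qnorm (f x) = qnorm x.

(** If psi satisfies (iii) with phi = id, then x = 1 shows that psi is an
    involution, so z := y - psi y is anti-fixed, and pure quaternions x show
    that psi fixes z u for every pure u.  When psi <> id some such z is
    nonzero; since every x splits as x = (<z,x> z + z Im(z̄ x)) / |z|^2, psi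
    is then the reflection x |-> x - 2<x,a>a = -a x̄ a in the axis a = z/|z|.
    Conversely, the argument of psi in (iii) is orthogonal to a when psi is
    that reflection. *)

From Stdlib Require Import Reals Lra Psatz Classical FunctionalExtensionality.
Open Scope R_scope.

Definition qzero : quat := Quat 0 0 0 0.
Definition qone : quat := Quat 1 0 0 0.
Definition qim (x : quat) : quat := Quat 0 (q1 x) (q2 x) (q3 x).
Definition qnorm2 (x : quat) : R :=
  q0 x * q0 x + q1 x * q1 x + q2 x * q2 x + q3 x * q3 x.
Definition qdot (x y : quat) : R :=
  q0 x * q0 y + q1 x * q1 y + q2 x * q2 y + q3 x * q3 y.
Definition qnormalize (z : quat) : quat := qscale (/ qnorm z) z.

Ltac quat_coords :=
  repeat match goal with x : quat |- _ => destruct x end;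
  unfold qzero, qone, qim, qnorm2, qdot, T, qadd, qopp, qscale, qmul, qconj in *;
  cbn [q0 q1 q2 q3] in *.

Lemma qadd_oppr_eq0 x y : qadd x (qopp y) = qzero -> x = y.
Proof. quat_coords; intro E; injection E; intros; f_equal; lra. Qed.

Lemma qnorm2_gt0 x : x <> qzero -> 0 < qnorm2 x.
Proof.
  intro Hx; apply Rnot_le_lt; intro Hle; apply Hx.
  quat_coords; f_equal; nra.
Qed.

Lemma qnorm_sqr x : qnorm x * qnorm x = qnorm2 x.
Proof.
  apply sqrt_sqrt; unfold qnorm2; nra.
Qed.

Lemma qnorm2_scale c x : qnorm2 (qscale c x) = c * c * qnorm2 x.
Proof. quat_coords; ring. Qed.

Lemma qnorm_normalize z : z <> qzero -> qnorm (qnormalize z) = 1.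
Proof.
  intro Hz; pose proof (qnorm2_gt0 z Hz) as Hpos.
  pose proof (qnorm_sqr z) as Hsq.
  assert (Hn : qnorm z <> 0) by (intro E; rewrite E in Hsq; lra).
  unfold qnorm at 1; fold (qnorm2 (qnormalize z)).
  unfold qnormalize; rewrite qnorm2_scale, <- Hsq.
  replace (/ qnorm z * / qnorm z * (qnorm z * qnorm z)) with 1 by (field; exact Hn).
  apply sqrt_1.
Qed.

Lemma T_scale c z w : T (qscale c z) (qscale c z) w = qscale (c * c) (T z z w).
Proof. quat_coords; f_equal; ring. Qed.

Lemma T_normalize z w :
  z <> qzero -> T (qnormalize z) (qnormalize z) w = qscale (/ qnorm2 z) (T z z w).
Proof.
  intro Hz; pose proof (qnorm2_gt0 z Hz) as Hpos.
  pose proof (qnorm_sqr z) as Hsq.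
  assert (Hn : qnorm z <> 0) by (intro E; rewrite E in Hsq; lra).
  unfold qnormalize; rewrite T_scale, <- Hsq, Rinv_mult; reflexivity.
Qed.

Lemma qopp_scale c x : qopp (qscale c x) = qscale c (qopp x).
Proof. quat_coords; f_equal; ring. Qed.

Lemma qconj_pure u : q0 u = 0 -> qconj u = qopp u.
Proof. quat_coords; intro E; subst; f_equal; ring. Qed.

(* [z (Re + Im)(z̄ x) = |z|^2 x] with [Re(z̄ x) = <z,x>], and [z (Re - Im)(z̄ x) = z x̄ z]. *)
Lemma qdecomp_axis z x : qnorm2 z <> 0 ->
  x = qscale (/ qnorm2 z)
        (qadd (qscale (qdot z x) z) (qmul z (qim (qmul (qconj z) x)))).
Proof. quat_coords; intro Hz; f_equal; field; exact Hz. Qed.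

Lemma qreflect_axis z x :
  qadd (qscale (qdot z x) (qopp z)) (qmul z (qim (qmul (qconj z) x)))
  = qopp (T z z (qconj x)).
Proof. quat_coords; f_equal; ring. Qed.

Lemma qreflectionE a x : qnorm2 a = 1 ->
  qopp (T a a (qconj x)) = qadd x (qscale (-2 * qdot x a) a).
Proof.
  intro Ha.
  transitivity (qadd (qscale (qnorm2 a) x) (qscale (-2 * qdot x a) a)).
  - quat_coords; f_equal; ring.
  - rewrite Ha; quat_coords; f_equal; ring.
Qed.

Lemma qreflection_fix a x : qnorm2 a = 1 -> qdot x a = 0 ->
  qopp (T a a (qconj x)) = x.
Proof.
  intros Ha Hx; rewrite qreflectionE, Hx by exact Ha.
  quat_coords; f_equal; ring.
Qed.

Lemma qreflection_condition_orth a x y : qnorm2 a = 1 ->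
  qdot (qadd (qmul (qopp (T a a (qconj y))) (qconj x)) (qmul y x)) a = 0.
Proof.
  intro Ha; rewrite qreflectionE by exact Ha.
  transitivity (2 * q0 x * qdot y a * (1 - qnorm2 a)).
  - quat_coords; ring.
  - rewrite Ha; ring.
Qed.

Section LinearMaps.

Variable f : quat -> quat.
Hypothesis f_linear : qlinear f.

Lemma linear_add x y : f (qadd x y) = qadd (f x) (f y).
Proof. exact (proj1 f_linear x y). Qed.

Lemma linear_scale c x : f (qscale c x) = qscale c (f x).
Proof. exact (proj2 f_linear c x). Qed.

Lemma linear_opp x : f (qopp x) = qopp (f x).
Proof.
  assert (E : forall w, qopp w = qscale (-1) w) by (intro w; quat_coords; f_equal; ring).
  rewrite !E; apply linear_scale.
Qed.

Lemma linear_reflection_of_axis z :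
  z <> qzero -> f z = qopp z ->
  (forall u, q0 u = 0 -> f (qmul z u) = qmul z u) ->
  f = fun x => qopp (T (qnormalize z) (qnormalize z) (qconj x)).
Proof.
  intros Hz Hneg Hpure; apply functional_extensionality; intro x.
  pose proof (qnorm2_gt0 z Hz) as Hpos.
  rewrite (qdecomp_axis z x) at 1 by lra.
  rewrite linear_scale, linear_add, linear_scale, Hneg, Hpure by reflexivity.
  rewrite qreflect_axis, T_normalize, qopp_scale by exact Hz.
  reflexivity.
Qed.

Section FixedPointCondition.

Hypothesis f_fix : forall x y,
  f (qadd (qmul (f y) (qconj x)) (qmul y x)) = qadd (qmul (f y) (qconj x)) (qmul y x).

Lemma fix_condition_involutive y : f (f y) = y.
Proof.
  pose proof (f_fix qone y) as H.
  replace (qadd (qmul (f y) (qconj qone)) (qmul y qone)) with (qadd (f y) y) in H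
    by (destruct (f y); quat_coords; f_equal; ring).
  rewrite linear_add in H.
  destruct (f (f y)), (f y), y; injection H; intros; f_equal; lra.
Qed.

Lemma fix_condition_antifixed y :
  f (qadd y (qopp (f y))) = qopp (qadd y (qopp (f y))).
Proof.
  rewrite linear_add, linear_opp, fix_condition_involutive.
  destruct (f y); quat_coords; f_equal; ring.
Qed.

Lemma fix_condition_mul_pure y u : q0 u = 0 ->
  f (qmul (qadd y (qopp (f y))) u) = qmul (qadd y (qopp (f y))) u.
Proof.
  intro Hu; pose proof (f_fix u y) as H.
  rewrite qconj_pure in H by exact Hu.
  replace (qadd (qmul (f y) (qopp u)) (qmul y u)) with (qmul (qadd y (qopp (f y))) u)
    in H by (destruct (f y); quat_coords; f_equal; ring).
  exact H.
Qed.

End FixedPointCondition.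

End LinearMaps.

Theorem lemma10 (psi : quat -> quat) (Hpsi : qisometry psi) :
  let phi := fun x : quat => x in
  ((forall x, phi (qmul (phi x) x) = qmul (phi x) x) /\
   (forall x, phi (qmul (qconj x) (psi x)) = qmul (qconj x) (psi x)) /\
   (forall x y, psi (qadd (qmul (psi y) (qconj x)) (qmul y (phi x)))
                = qadd (qmul (psi y) (qconj x)) (qmul y (phi x))))
  <->
  (psi = (fun x => x) \/
   exists a : quat, qnorm a = 1 /\ psi = (fun x => qopp (T a a (qconj x)))).
Proof.
  cbv beta zeta; destruct Hpsi as [Hlin _]; split.
  - intros (_ & _ & Hfix).
    destruct (classic (forall y, psi y = y)) as [Hid | Hnid].
    + left; apply functional_extensionality; exact Hid.
    + right; apply not_all_ex_not in Hnid as [y Hy].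
      assert (Hz : qadd y (qopp (psi y)) <> qzero)
        by (intro E; apply Hy; symmetry; exact (qadd_oppr_eq0 _ _ E)).
      exists (qnormalize (qadd y (qopp (psi y)))); split.
      * exact (qnorm_normalize _ Hz).
      * apply linear_reflection_of_axis; trivial.
        -- exact (fix_condition_antifixed psi Hlin Hfix y).
        -- exact (fix_condition_mul_pure psi Hfix y).
  - intros [-> | (a & Ha & ->)]; repeat split; intros; trivial.
    assert (Ha2 : qnorm2 a = 1) by (rewrite <- qnorm_sqr, Ha; ring).
    apply qreflection_fix, qreflection_condition_orth; exact Ha2.
Qed.
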